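(* There is a constant $C>0$ such that $|L_{nl}|\le C\sqrt{n+1}$ for all integers $0\le l\le n$.
   Context: With $\Lambda(z)=\frac{\Gamma(z+1/2)}{\Gamma(z+1)}$, the coefficients $L_{nl}$ ($0\le l\le n$) are defined by: $L_{nl}=1$ if $n=l=0$; $L_{nl}=\frac{\sqrt\pi}{2\Lambda(n)}$ if $n=l>0$; $L_{nl}=\frac{-n(l+1/2)}{(n+l+1)(n-l)}\Lambda\!\left(\frac{n-l-2}{2}\right)\Lambda\!\left(\frac{n+l-1}{2}\right)$ if $n>l$ and $n+l$ is even; $L_{nl}=0$ otherwise. *)

From Stdlib Require Import Reals Arith.
From Coquelicot Require Import Coquelicot.
Open Scope R_scope.

Definition Gamma (x : R) : R :=
  RInt_gen (fun t => Rpower t (x - 1) * exp (- t))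
           (at_right 0) (Rbar_locally p_infty).

Definition Lambda (z : R) : R := Gamma (z + / 2) / Gamma (z + 1).

Definition Lcoef (n l : nat) : R :=
  if (Nat.eqb n 0 && Nat.eqb l 0)%bool then 1
  else if Nat.eqb n l then sqrt PI / (2 * Lambda (INR n))
  else if (Nat.ltb l n && Nat.even (n + l))%bool then
    (- INR n * (INR l + / 2)) / ((INR n + INR l + 1) * (INR n - INR l))
    * Lambda ((INR n - INR l - 2) / 2) * Lambda ((INR n + INR l - 1) / 2)
  else 0.

From Stdlib Require Import Reals Lra Lia Factorial.
From Coquelicot Require Import Coquelicot.
Open Scope R_scope.

(* Integration by parts gives [Gamma (x + 1) = x * Gamma (x)] once the integral for [Gamma (1/2)]
   converges, so [Lambda k = Gamma (1/2) * c k] and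
   [Lambda (k + 1/2) = 1 / (Gamma (1/2) * c k * (k + 1/2))], where [c k = (1/2)_k / k!].
   The elementary bounds [1 / (2 sqrt (k + 1)) <= c k <= 1] then give
   [|L_nn| <= sqrt pi / |Gamma (1/2)| * sqrt (n + 1)], and, for [n = l + 2a + 2], since the
   rational prefactor is at most [n / 4] and [Gamma (1/2)] cancels,
   [|L_nl| <= (n / 4) * c a / (c (l + a) * (l + a + 1/2)) <= 2 sqrt (n + 1)]. *)

Definition gamma_integrand (x t : R) : R := Rpower t (x - 1) * exp (- t).

Lemma Rpower_pos (t y : R) : 0 < Rpower t y.
Proof. unfold Rpower; apply exp_pos. Qed.

Lemma is_derive_Rpower (y t : R) : 0 < t ->
  is_derive (fun s => Rpower s y) t (y * Rpower t (y - 1)).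
Proof. intros Ht; apply is_derive_Reals, derivable_pt_lim_power; exact Ht. Qed.

Lemma ex_derive_Rpower_exp (y t : R) : 0 < t ->
  ex_derive (fun s => Rpower s y * exp (- s)) t.
Proof.
  intros Ht. apply (ex_derive_mult (fun s => Rpower s y) (fun s => exp (- s))).
  - eexists; apply is_derive_Rpower; exact Ht.
  - auto_derive; auto.
Qed.

Lemma continuous_gamma_integrand (x t : R) : 0 < t -> continuous (gamma_integrand x) t.
Proof.
  intros Ht. apply (@ex_derive_continuous R_AbsRing R_NormedModule).
  apply ex_derive_Rpower_exp; exact Ht.
Qed.

Lemma filter_prod_pos (P : R -> Prop) : (forall t, 0 < t -> P t) ->
  filter_prod (at_right 0) (Rbar_locally p_infty)
    (fun ab => forall t, Rmin (fst ab) (snd ab) <= t <= Rmax (fst ab) (snd ab) -> P t).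
Proof.
  intros HP. apply Filter_prod with (fun a => 0 < a) (fun b => 0 < b).
  - exists (mkposreal 1 Rlt_0_1). intros y _ Hy; exact Hy.
  - exists 0. intros; assumption.
  - intros a b Ha Hb t Ht. apply HP. simpl in Ht.
    assert (0 < Rmin a b) by (apply Rmin_case; assumption). lra.
Qed.

Lemma is_RInt_gen_antiderivative (f F : R -> R) (la lb : R) :
  (forall t, 0 < t -> is_derive F t (f t)) ->
  (forall t, 0 < t -> continuous f t) ->
  filterlim F (at_right 0) (locally la) ->
  filterlim F (Rbar_locally p_infty) (locally lb) ->
  is_RInt_gen f (at_right 0) (Rbar_locally p_infty) (lb - la).
Proof.
  intros HF Hf Hla Hlb.
  assert (HD : forall t, 0 < t -> Derive F t = f t).
  { intros t Ht; apply is_derive_unique, HF, Ht. }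
  apply is_RInt_gen_ext with (Derive F).
  - eapply filter_imp; [| apply (filter_prod_pos _ HD)].
    intros [a b] H t Ht; apply H; simpl in *; lra.
  - apply is_RInt_gen_Derive; [apply filter_prod_pos .. | exact Hla | exact Hlb].
    + intros t Ht; eexists; apply HF, Ht.
    + intros t Ht. apply (continuous_ext_loc _ f); [| apply Hf, Ht].
      eapply filter_imp; [| apply (open_gt 0 t Ht)].
      intros s Hs; symmetry; apply HD, Hs.
Qed.

Lemma Rpower_exp_vanishes_at_0 (x : R) : 0 < x ->
  filterlim (fun t => Rpower t x * exp (- t)) (at_right 0) (locally 0).
Proof.
  intros Hx. apply filterlim_locally. intros [eps He]; simpl.
  (* [t < eps ^ (1 / x)] gives [t ^ x < eps], and [exp (- t) <= 1] *)
  set (d := Rpower eps (/ x)).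
  exists (mkposreal d (Rpower_pos _ _)). intros t Ht Ht0.
  change (Rabs (t - 0) < d) in Ht. rewrite Rminus_0_r, Rabs_right in Ht by lra.
  change (Rabs (Rpower t x * exp (- t) - 0) < eps).
  assert (Hd : Rpower d x = eps).
  { unfold d; rewrite Rpower_mult, Rinv_l, Rpower_1 by lra; reflexivity. }
  assert (H1 : Rpower t x < eps) by (rewrite <- Hd; apply Rlt_Rpower_l; lra).
  assert (H2 : exp (- t) < 1) by (rewrite <- exp_0; apply exp_increasing; lra).
  assert (H3 := Rpower_pos t x). assert (H4 := exp_pos (- t)).
  rewrite Rminus_0_r, Rabs_right by nra. nra.
Qed.

Lemma Rpower_exp_vanishes_at_p_infty (x : R) :
  filterlim (fun t => Rpower t x * exp (- t)) (Rbar_locally p_infty) (locally 0).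
Proof.
  (* [t ^ x * exp (- t) = exp (t * (x * (ln t / t) - 1))] and [ln t / t -> 0] *)
  assert (H1 : is_lim (fun t => x * (ln t / t) - 1) p_infty (-1)).
  { replace (-1) with (x * 0 - 1) by ring.
    eapply is_lim_minus; [apply is_lim_scal_l, is_lim_div_ln_p | apply is_lim_const |].
    simpl; reflexivity. }
  assert (H2 := is_lim_mult _ _ _ _ _ (is_lim_id p_infty) H1 ltac:(simpl; lra)).
  assert (E : Rbar_mult p_infty (-1) = m_infty).
  { simpl. destruct (Rle_dec 0 (-1)); [exfalso; lra | reflexivity]. }
  rewrite E in H2.
  assert (H3 : is_lim (fun t => exp (t * (x * (ln t / t) - 1))) p_infty 0).
  { apply (is_lim_comp _ _ _ _ _ is_lim_exp_m H2). exists 0; intros; discriminate. }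
  eapply filterlim_ext_loc; [| exact H3].
  exists 0. intros t Ht. unfold Rpower. rewrite <- exp_plus. f_equal. field. lra.
Qed.

Lemma is_RInt_gen_gamma_succ (x l : R) : 0 < x ->
  is_RInt_gen (gamma_integrand x) (at_right 0) (Rbar_locally p_infty) l ->
  is_RInt_gen (gamma_integrand (x + 1)) (at_right 0) (Rbar_locally p_infty) (x * l).
Proof.
  intros Hx Hl.
  (* integration by parts: [t ^ x * exp (- t)] vanishes at both ends *)
  set (F := fun t => Rpower t x * exp (- t)).
  set (dF := fun t => x * gamma_integrand x t - gamma_integrand (x + 1) t).
  assert (HF : forall t, 0 < t -> is_derive F t (dF t)).
  { intros t Ht.
    assert (He : is_derive (fun s => exp (- s)) t (- exp (- t))) by (auto_derive; auto; ring).
    replace (dF t) with (plus (mult (x * Rpower t (x - 1)) (exp (- t)))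
                              (mult (Rpower t x) (- exp (- t)))).
    - exact (is_derive_mult _ _ _ _ _ (is_derive_Rpower x t Ht) He Rmult_comm).
    - unfold dF, gamma_integrand, plus, mult; simpl.
      replace (x + 1 - 1) with x by ring. ring. }
  assert (HdF : is_RInt_gen dF (at_right 0) (Rbar_locally p_infty) (0 - 0)).
  { apply is_RInt_gen_antiderivative with F;
      [exact HF | | apply Rpower_exp_vanishes_at_0, Hx | apply Rpower_exp_vanishes_at_p_infty].
    intros t Ht. unfold dF.
    apply (continuous_minus (fun s => x * gamma_integrand x s) (gamma_integrand (x + 1)));
      [apply (continuous_scal_r x (gamma_integrand x)) |]; apply continuous_gamma_integrand, Ht. }
  replace (x * l) with (minus (scal x l) (0 - 0))
    by (unfold minus, plus, opp, scal; simpl; unfold mult; simpl; ring).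
  eapply is_RInt_gen_ext; [| apply (is_RInt_gen_minus _ _ _ _ (is_RInt_gen_scal _ x l Hl) HdF)].
  apply filter_forall. intros _ t _. unfold dF, minus, plus, opp, scal; simpl; unfold mult; simpl.
  ring.
Qed.

Lemma is_RInt_gen_gamma_1 :
  is_RInt_gen (gamma_integrand 1) (at_right 0) (Rbar_locally p_infty) 1.
Proof.
  assert (Hexp : forall t, Rpower t 0 * exp (- t) = exp (- t)).
  { intros t. unfold Rpower. rewrite Rmult_0_l, exp_0. ring. }
  assert (H : is_RInt_gen (fun t => - exp (- t)) (at_right 0) (Rbar_locally p_infty) (0 - 1)).
  { apply is_RInt_gen_antiderivative with (fun t => exp (- t)).
    - intros t _; auto_derive; auto; ring.
    - intros t _; apply (@ex_derive_continuous R_AbsRing R_NormedModule); auto_derive; auto.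
    - apply (filterlim_filter_le_1 (F := locally 0)); [apply filter_le_within |].
      replace 1 with (exp (- 0)) by (rewrite Ropp_0, exp_0; reflexivity).
      apply (@ex_derive_continuous R_AbsRing R_NormedModule (fun t => exp (- t))).
      auto_derive; auto.
    - eapply filterlim_ext; [exact Hexp | apply Rpower_exp_vanishes_at_p_infty]. }
  replace 1 with (opp (0 - 1)) at 2 by (unfold opp; simpl; ring).
  eapply is_RInt_gen_ext; [| apply (is_RInt_gen_opp _ _ H)].
  apply filter_forall. intros _ t _. unfold gamma_integrand, opp; simpl.
  rewrite Rminus_diag, Hexp. ring.
Qed.

Lemma Rabs_RInt_le_antiderivative (f g G : R -> R) (u v : R) : u <= v -> ex_RInt f u v ->
  (forall t, u <= t <= v -> Rabs (f t) <= g t) ->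
  (forall t, u <= t <= v -> is_derive G t (g t)) ->
  (forall t, u <= t <= v -> continuous g t) ->
  Rabs (RInt f u v) <= G v - G u.
Proof.
  intros Huv Hf Hfg HG Hg.
  apply (norm_RInt_le f g u v);
    [exact Huv | exact Hfg | apply (@RInt_correct R_CompleteNormedModule), Hf |].
  apply (@is_RInt_derive R_CompleteNormedModule); rewrite Rmin_left, Rmax_right by exact Huv;
    assumption.
Qed.

Section GammaIntegralConverges.

Variable x : R.

Let partial_gamma (t : R) : R := RInt (gamma_integrand x) 1 t.

Lemma ex_RInt_gamma_integrand (u v : R) : 0 < u -> 0 < v -> ex_RInt (gamma_integrand x) u v.
Proof.
  intros Hu Hv. apply (@ex_RInt_continuous R_CompleteNormedModule).
  intros t Ht. apply continuous_gamma_integrand.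
  assert (0 < Rmin u v) by (apply Rmin_case; assumption). lra.
Qed.

Lemma partial_gamma_ball (P : R -> Prop) (eps : R) : (forall t, P t -> 0 < t) ->
  (forall u v, P u -> P v -> u <= v -> Rabs (RInt (gamma_integrand x) u v) < eps) ->
  forall u v, P u -> P v -> ball (partial_gamma u) eps (partial_gamma v).
Proof.
  intros HP Heps.
  assert (Hle : forall u v, P u -> P v -> u <= v ->
                ball (partial_gamma u) eps (partial_gamma v)).
  { intros u v Pu Pv Huv. change (Rabs (partial_gamma v - partial_gamma u) < eps).
    replace (partial_gamma v - partial_gamma u) with (RInt (gamma_integrand x) u v);
      [apply Heps; assumption |].
    unfold partial_gamma. rewrite <- (RInt_Chasles _ 1 u v)
      by (apply ex_RInt_gamma_integrand; try lra; apply HP; assumption).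
    unfold plus; simpl. lra. }
  intros u v Pu Pv. destruct (Rle_dec u v).
  - apply Hle; assumption.
  - apply ball_sym, Hle; [assumption .. | lra].
Qed.

Hypothesis Hx : 0 < x <= 1.

Lemma partial_gamma_converges_at_0 :
  exists la, filterlim partial_gamma (at_right 0) (locally la).
Proof.
  apply (filterlim_locally_cauchy (U := R_CompleteSpace) (F := at_right 0)).
  intros [eps He]; simpl.
  (* near 0 the integrand is dominated by [t ^ (x - 1)], with antiderivative [t ^ x / x] *)
  set (d := Rpower (x * eps) (/ x)).
  exists (fun t => 0 < t < d). split.
  - exists (mkposreal d (Rpower_pos _ _)). intros t Ht Ht0.
    change (Rabs (t - 0) < d) in Ht. rewrite Rminus_0_r, Rabs_right in Ht by lra. lra.
  - apply partial_gamma_ball; [intros t Ht; apply Ht |]. intros u v [Hu _] [Hv Hvd] Huv.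
    eapply Rle_lt_trans.
    + apply (Rabs_RInt_le_antiderivative _ (fun t => Rpower t (x - 1))
               (fun t => / x * Rpower t x));
        [exact Huv | apply ex_RInt_gamma_integrand; lra | ..]; intros t Ht.
      * unfold gamma_integrand. assert (H1 := Rpower_pos t (x - 1)).
        assert (H2 : exp (- t) <= 1) by (rewrite <- exp_0; apply Rlt_le, exp_increasing; lra).
        rewrite Rabs_right by (apply Rle_ge, Rmult_le_pos; [lra | apply Rlt_le, exp_pos]). nra.
      * replace (Rpower t (x - 1)) with (/ x * (x * Rpower t (x - 1))) by (field; lra).
        apply (is_derive_scal (fun s => Rpower s x)), is_derive_Rpower; lra.
      * apply (@ex_derive_continuous R_AbsRing R_NormedModule).
        eexists; apply is_derive_Rpower; lra.
    + assert (Hd : Rpower d x = x * eps).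
      { unfold d; rewrite Rpower_mult, Rinv_l, Rpower_1 by nra; reflexivity. }
      assert (Hv' : Rpower v x < x * eps) by (rewrite <- Hd; apply Rlt_Rpower_l; lra).
      assert (Hu' := Rpower_pos u x).
      apply (Rmult_lt_reg_l x); [lra |].
      rewrite Rmult_minus_distr_l, <- !Rmult_assoc, Rinv_r by lra. lra.
Qed.

Lemma partial_gamma_converges_at_p_infty :
  exists lb, filterlim partial_gamma (Rbar_locally p_infty) (locally lb).
Proof.
  apply (filterlim_locally_cauchy (U := R_CompleteSpace) (F := Rbar_locally p_infty)).
  intros [eps He]; simpl.
  (* on [1, oo) the integrand is dominated by [exp (- t)] since [x <= 1] *)
  set (M := Rmax 1 (- ln eps)).
  assert (HM1 : 1 <= M) by apply Rmax_l. assert (HM2 : - ln eps <= M) by apply Rmax_r.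
  exists (fun t => M < t). split; [exists M; auto |].
  apply partial_gamma_ball; [intros; lra |]. intros u v Hu Hv Huv.
  eapply Rle_lt_trans.
  - apply (Rabs_RInt_le_antiderivative _ (fun t => exp (- t)) (fun t => - exp (- t)));
      [exact Huv | apply ex_RInt_gamma_integrand; lra | ..]; intros t Ht.
    + unfold gamma_integrand.
      assert (H1 : Rpower t (x - 1) <= Rpower t 0) by (apply Rle_Rpower; lra).
      rewrite Rpower_O in H1 by lra.
      assert (H2 := Rpower_pos t (x - 1)). assert (H3 := exp_pos (- t)).
      rewrite Rabs_right by nra. nra.
    + auto_derive; auto; ring.
    + apply (@ex_derive_continuous R_AbsRing R_NormedModule); auto_derive; auto.
  - assert (H1 := exp_pos (- v)).
    assert (H2 : exp (- u) < exp (ln eps)) by (apply exp_increasing; lra).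
    rewrite exp_ln in H2 by exact He. lra.
Qed.

Lemma ex_RInt_gen_gamma :
  ex_RInt_gen (gamma_integrand x) (at_right 0) (Rbar_locally p_infty).
Proof.
  destruct partial_gamma_converges_at_0 as [la Hla].
  destruct partial_gamma_converges_at_p_infty as [lb Hlb].
  exists (lb - la). apply is_RInt_gen_antiderivative with partial_gamma;
    [| apply continuous_gamma_integrand | exact Hla | exact Hlb].
  intros t Ht. apply (is_derive_RInt _ _ 1); [| apply continuous_gamma_integrand, Ht].
  eapply filter_imp; [| apply (open_gt 0 t Ht)].
  intros s Hs. apply (@RInt_correct R_CompleteNormedModule), ex_RInt_gamma_integrand; lra.
Qed.

End GammaIntegralConverges.

Fixpoint pochhammer_half (k : nat) : R :=
  match k with O => 1 | S k => pochhammer_half k * (INR k + / 2) end.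

Lemma is_RInt_gen_gamma_nat (k : nat) :
  is_RInt_gen (gamma_integrand (INR k + 1)) (at_right 0) (Rbar_locally p_infty) (INR (fact k)).
Proof.
  induction k as [|k IHk].
  - simpl. rewrite Rplus_0_l. exact is_RInt_gen_gamma_1.
  - replace (INR (fact (S k))) with ((INR k + 1) * INR (fact k))
      by (rewrite fact_simpl, mult_INR, S_INR; ring).
    rewrite S_INR.
    apply is_RInt_gen_gamma_succ; [| exact IHk]. pose proof (pos_INR k); lra.
Qed.

Lemma is_RInt_gen_gamma_nat_half (k : nat) :
  is_RInt_gen (gamma_integrand (INR k + / 2)) (at_right 0) (Rbar_locally p_infty)
    (Gamma (/ 2) * pochhammer_half k).
Proof.
  induction k as [|k IHk].
  - cbn [INR pochhammer_half]. rewrite Rplus_0_l, Rmult_1_r.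
    unfold Gamma. apply (RInt_gen_correct (V := R_CompleteNormedModule)), ex_RInt_gen_gamma. lra.
  - rewrite S_INR. replace (INR k + 1 + / 2) with (INR k + / 2 + 1) by ring.
    replace (Gamma (/ 2) * pochhammer_half (S k))
      with ((INR k + / 2) * (Gamma (/ 2) * pochhammer_half k))
      by (cbn [pochhammer_half]; ring).
    apply is_RInt_gen_gamma_succ; [| exact IHk]. pose proof (pos_INR k); lra.
Qed.

Lemma Gamma_nat (k : nat) : Gamma (INR k + 1) = INR (fact k).
Proof.
  unfold Gamma. apply (is_RInt_gen_unique (V := R_CompleteNormedModule)), is_RInt_gen_gamma_nat.
Qed.

Lemma Gamma_nat_half (k : nat) : Gamma (INR k + / 2) = Gamma (/ 2) * pochhammer_half k.
Proof.
  unfold Gamma.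
  apply (is_RInt_gen_unique (V := R_CompleteNormedModule)), is_RInt_gen_gamma_nat_half.
Qed.

(* [pochhammer_half k / k! = binomial (2k) k / 4 ^ k] *)
Definition central_ratio (k : nat) : R := pochhammer_half k / INR (fact k).

Lemma INR_fact_pos (k : nat) : 0 < INR (fact k).
Proof. apply lt_0_INR, lt_O_fact. Qed.

Lemma central_ratio_S (k : nat) :
  central_ratio (S k) = central_ratio k * (INR k + / 2) / (INR k + 1).
Proof.
  unfold central_ratio. cbn [pochhammer_half]. rewrite fact_simpl, mult_INR, S_INR.
  pose proof (INR_fact_pos k). pose proof (pos_INR k). field. lra.
Qed.

Lemma central_ratio_pos (k : nat) : 0 < central_ratio k.
Proof.
  induction k as [|k IHk]; [unfold central_ratio; simpl; lra |].
  rewrite central_ratio_S. pose proof (pos_INR k).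
  apply Rdiv_lt_0_compat; [apply Rmult_lt_0_compat |]; lra.
Qed.

Lemma central_ratio_le_1 (k : nat) : central_ratio k <= 1.
Proof.
  induction k as [|k IHk]; [unfold central_ratio; simpl; lra |].
  rewrite central_ratio_S. pose proof (pos_INR k). pose proof (central_ratio_pos k).
  apply Rle_div_l; [lra |]. nra.
Qed.

Lemma central_ratio_sqr_ge (k : nat) : 1 <= 4 * central_ratio (S k) ^ 2 * INR (S k).
Proof.
  induction k as [|k IHk].
  - rewrite central_ratio_S. unfold central_ratio; simpl. lra.
  - rewrite central_ratio_S, (S_INR (S k)).
    set (y := INR (S k)) in *. set (g := central_ratio (S k)) in *.
    assert (Hy : 0 <= y) by apply pos_INR.
    replace (4 * (g * (y + / 2) / (y + 1)) ^ 2 * (y + 1))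
      with (4 * g ^ 2 * y + g ^ 2 / (y + 1)) by (field; lra).
    assert (0 <= g ^ 2 / (y + 1)) by (apply Rdiv_le_0_compat; nra).
    lra.
Qed.

Lemma central_ratio_ge (k : nat) : 1 <= 2 * central_ratio k * sqrt (INR k + 1).
Proof.
  destruct k as [|k].
  - unfold central_ratio; simpl. rewrite Rplus_0_l, sqrt_1. lra.
  - assert (Hg := central_ratio_sqr_ge k). assert (Hg0 := central_ratio_pos (S k)).
    assert (Hk := pos_INR (S k)). assert (Hs0 := sqrt_pos (INR (S k) + 1)).
    set (g := central_ratio (S k)) in *. set (s := sqrt (INR (S k) + 1)) in *.
    assert (Hs : s * s = INR (S k) + 1) by (apply sqrt_sqrt; lra).
    assert (Hsq : 1 <= (2 * g * s) * (2 * g * s)).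
    { replace ((2 * g * s) * (2 * g * s)) with (4 * g ^ 2 * (s * s)) by ring.
      rewrite Hs. nra. }
    assert (0 <= 2 * g * s) by (apply Rmult_le_pos; lra).
    nra.
Qed.

Lemma Lambda_nat (k : nat) : Lambda (INR k) = Gamma (/ 2) * central_ratio k.
Proof. unfold Lambda, central_ratio. rewrite Gamma_nat_half, Gamma_nat. unfold Rdiv. ring. Qed.

Lemma Lambda_nat_half (k : nat) :
  Lambda (INR k + / 2) = / (Gamma (/ 2) * central_ratio k * (INR k + / 2)).
Proof.
  unfold Lambda, central_ratio.
  replace (INR k + / 2 + / 2) with (INR k + 1) by field.
  replace (INR k + / 2 + 1) with (INR (S k) + / 2) by (rewrite S_INR; field).
  rewrite Gamma_nat, Gamma_nat_half. cbn [pochhammer_half]. unfold Rdiv.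
  rewrite !Rinv_mult, Rinv_inv. ring.
Qed.

Lemma Lcoef_0_0 : Lcoef 0 0 = 1.
Proof. reflexivity. Qed.

Lemma Lcoef_diag (n : nat) : Lcoef (S n) (S n) = sqrt PI / (2 * Lambda (INR (S n))).
Proof. unfold Lcoef. cbn [Nat.eqb andb]. rewrite Nat.eqb_refl. reflexivity. Qed.

Lemma Lcoef_odd (n l : nat) : Nat.even (n + l) = false -> Lcoef n l = 0.
Proof.
  intros Hodd. unfold Lcoef.
  destruct (Nat.eqb n 0 && Nat.eqb l 0)%bool eqn:E00.
  - apply andb_prop in E00. destruct E00 as [En El].
    apply Nat.eqb_eq in En, El. subst. discriminate.
  - destruct (Nat.eqb n l) eqn:Enl.
    + apply Nat.eqb_eq in Enl. subst.
      replace (l + l)%nat with (2 * l)%nat in Hodd by lia.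
      rewrite Nat.even_mul in Hodd. discriminate.
    + rewrite Hodd, Bool.andb_false_r. reflexivity.
Qed.

Lemma Lcoef_off_diag (l a : nat) :
  Lcoef (l + 2 * a + 2) l =
  - ((INR l + 2 * INR a + 2) * (INR l + / 2) / ((2 * INR l + 2 * INR a + 3) * (2 * INR a + 2)))
  * Lambda (INR a) * Lambda (INR (l + a) + / 2).
Proof.
  unfold Lcoef.
  replace (Nat.eqb (l + 2 * a + 2) 0) with false by (symmetry; apply Nat.eqb_neq; lia).
  replace (Nat.eqb (l + 2 * a + 2) l) with false by (symmetry; apply Nat.eqb_neq; lia).
  replace (Nat.ltb l (l + 2 * a + 2)) with true by (symmetry; apply Nat.ltb_lt; lia).
  replace (Nat.even (l + 2 * a + 2 + l)) with true
    by (symmetry; apply Nat.even_spec; exists (l + a + 1)%nat; lia).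
  cbn [andb].
  assert (HN : INR (l + 2 * a + 2) = INR l + 2 * INR a + 2)
    by (rewrite !plus_INR, mult_INR; simpl; ring).
  rewrite HN, plus_INR.
  replace ((INR l + 2 * INR a + 2 - INR l - 2) / 2) with (INR a) by field.
  replace ((INR l + 2 * INR a + 2 + INR l - 1) / 2) with (INR l + INR a + / 2) by field.
  replace ((INR l + 2 * INR a + 2 + INR l + 1) * (INR l + 2 * INR a + 2 - INR l))
    with ((2 * INR l + 2 * INR a + 3) * (2 * INR a + 2)) by ring.
  unfold Rdiv. ring.
Qed.

Lemma Rinv_nonneg (x : R) : 0 <= x -> 0 <= / x.
Proof. intros [Hx | <-]; [apply Rlt_le, Rinv_0_lt_compat, Hx | rewrite Rinv_0; lra]. Qed.

Lemma Rabs_Lcoef_diag_le (n : nat) :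
  Rabs (Lcoef (S n) (S n)) <= sqrt PI / Rabs (Gamma (/ 2)) * sqrt (INR (S n) + 1).
Proof.
  rewrite Lcoef_diag, Lambda_nat.
  assert (Hg := central_ratio_pos (S n)). assert (Hgs := central_ratio_ge (S n)).
  set (g := central_ratio (S n)) in *. set (s := sqrt (INR (S n) + 1)) in *.
  replace (Rabs (sqrt PI / (2 * (Gamma (/ 2) * g))))
    with (sqrt PI / Rabs (Gamma (/ 2)) * / (2 * g)).
  2: { unfold Rdiv. rewrite Rabs_mult, Rabs_inv, !Rabs_mult, !Rinv_mult.
       rewrite (Rabs_right (sqrt PI)), (Rabs_right 2), (Rabs_right g)
         by (apply Rle_ge; try apply sqrt_pos; lra).
       ring. }
  apply Rmult_le_compat_l.
  - apply Rmult_le_pos; [apply sqrt_pos | apply Rinv_nonneg, Rabs_pos].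
  - apply (Rmult_le_reg_l (2 * g)); [lra |]. rewrite Rinv_r by lra. lra.
Qed.

Lemma Rabs_Lcoef_off_diag_le (l a : nat) :
  Rabs (Lcoef (l + 2 * a + 2) l) <= 2 * sqrt (INR (l + 2 * a + 2) + 1).
Proof.
  rewrite Lcoef_off_diag, Lambda_nat, Lambda_nat_half.
  assert (Hga := central_ratio_pos a). assert (Hga1 := central_ratio_le_1 a).
  assert (Hgj := central_ratio_pos (l + a)). assert (Hgjs := central_ratio_ge (l + a)).
  assert (HJ : INR (l + a) = INR l + INR a) by apply plus_INR.
  assert (HsS : sqrt (INR (l + a) + 1) <= sqrt (INR (l + 2 * a + 2) + 1))
    by (apply sqrt_le_1_alt, Rplus_le_compat_r, le_INR; lia).
  assert (HL := pos_INR l). assert (HA := pos_INR a).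
  assert (Hs := sqrt_pos (INR (l + a) + 1)).
  set (p := (INR l + 2 * INR a + 2) * (INR l + / 2)
            / ((2 * INR l + 2 * INR a + 3) * (2 * INR a + 2))).
  set (G0 := Gamma (/ 2)). set (ga := central_ratio a) in *.
  set (gj := central_ratio (l + a)) in *. set (J := INR (l + a)) in *.
  set (s := sqrt (J + 1)) in *. set (S := sqrt (INR (l + 2 * a + 2) + 1)) in *.
  assert (Hp0 : 0 <= p) by (apply Rdiv_le_0_compat; nra).
  assert (Hpga : p * ga <= J + / 2).
  { assert (Hp : p <= (INR l + 2 * INR a + 2) / 4).
    { assert (4 * (INR l + / 2) <= (2 * INR l + 2 * INR a + 3) * (2 * INR a + 2)) by nra.
      unfold p. apply Rle_div_l; [nra |]. nra. }
    nra. }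
  assert (HD : 0 < gj * (J + / 2)) by (apply Rmult_lt_0_compat; lra).
  apply Rle_trans with (p * ga / (gj * (J + / 2))).
  - (* [Gamma (1/2) <> 0] is never proved: if it vanished, [/ 0 = 0] would make the term 0 *)
    destruct (Req_dec G0 0) as [HG | HG].
    + rewrite HG, !Rmult_0_l, Rmult_0_r, Rmult_0_l, Rabs_R0.
      apply Rdiv_le_0_compat; [nra | exact HD].
    + replace (- p * (G0 * ga) * / (G0 * gj * (J + / 2)))
        with (- (p * ga / (gj * (J + / 2)))) by (field; lra).
      rewrite Rabs_Ropp, Rabs_right; [lra |].
      apply Rle_ge, Rdiv_le_0_compat; [nra | exact HD].
  - apply Rle_div_l; [exact HD |]. nra.
Qed.

Theorem mainTheorem5 :
  exists C : R, 0 < C /\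
    forall n l : nat, (l <= n)%nat -> Rabs (Lcoef n l) <= C * sqrt (INR n + 1).
Proof.
  set (K := sqrt PI / Rabs (Gamma (/ 2))).
  assert (HK : 0 <= K) by (apply Rmult_le_pos; [apply sqrt_pos | apply Rinv_nonneg, Rabs_pos]).
  exists (2 + K). split; [lra |].
  intros n l Hln.
  assert (Hs : 1 <= sqrt (INR n + 1)).
  { rewrite <- sqrt_1 at 1. apply sqrt_le_1_alt. pose proof (pos_INR n). lra. }
  destruct (Nat.eq_dec l n) as [<- | Hne].
  - destruct l as [| m].
    + rewrite Lcoef_0_0, Rabs_R1. nra.
    + assert (H := Rabs_Lcoef_diag_le m). fold K in H. nra.
  - destruct (Nat.even (n + l)) eqn:Hev.
    + apply Nat.even_spec in Hev. destruct Hev as [q Hq].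
      replace n with (l + 2 * (q - l - 1) + 2)%nat in * by lia.
      pose proof (Rabs_Lcoef_off_diag_le l (q - l - 1)). nra.
    + rewrite Lcoef_odd by exact Hev. rewrite Rabs_R0. nra.
Qed.
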